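(* Let $X$ be a compact Hausdorff space and let $M$ be a self-conjugate function space on $X$. Then for any three pairwise distinct points $x,x',z\in Ch(M)$ there exists $h\in M$ such that $|h(x)|\neq|h(x')|$ and $h(z)=0$.
   Context: $C(X)$ denotes the space of continuous scalar-valued (real or complex) functions on $X$ with the supremum norm. A function space on $X$ is a linear subspace of $C(X)$ containing the constant function $1$ and separating the points of $X$; it is self-conjugate if $\bar f\in M$ whenever $f\in M$. For a linear subspace $A\subseteq C(X)$, its Choquet boundary $Ch(A)$ is the set of points $x\in X$ such that the evaluation functional $\delta_x:A\to$ scalars, $g\mapsto g(x)$, is an extreme point of the closed unit ball of the dual space of $(A,\|\cdot\|)$. *)

From Stdlib Require Import Reals List.
Open Scope R_scope.

Definition Cx : Type := (R * R)%type.
Definition Cre (z : Cx) : R := fst z.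
Definition Cim (z : Cx) : R := snd z.
Definition RtoC (r : R) : Cx := (r, 0).
Definition C0 : Cx := (0, 0).
Definition C1 : Cx := (1, 0).
Definition Cadd (z w : Cx) : Cx := (fst z + fst w, snd z + snd w).
Definition Copp (z : Cx) : Cx := (- fst z, - snd z).
Definition Csub (z w : Cx) : Cx := Cadd z (Copp w).
Definition Cmul (z w : Cx) : Cx :=
  (fst z * fst w - snd z * snd w, fst z * snd w + snd z * fst w).
Definition Cconj (z : Cx) : Cx := (fst z, - snd z).
Definition Cmod (z : Cx) : R := sqrt (fst z * fst z + snd z * snd z).

(* The scalar field: real case (cplx = false): reals, i.e. imaginary part 0;
   complex case (cplx = true): all of C. *)
Definition scalar (cplx : bool) (z : Cx) : Prop := cplx = true \/ snd z = 0.

Definition is_topology {X : Type} (T : (X -> Prop) -> Prop) : Prop :=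
  T (fun _ => True) /\ T (fun _ => False) /\
  (forall (I : Type) (U : I -> X -> Prop), (forall i, T (U i)) ->
      T (fun x => exists i, U i x)) /\
  (forall U V, T U -> T V -> T (fun x => U x /\ V x)).

Definition compact_space {X : Type} (T : (X -> Prop) -> Prop) : Prop :=
  forall (I : Type) (U : I -> X -> Prop),
    (forall i, T (U i)) -> (forall x, exists i, U i x) ->
    exists l : list I, forall x, exists i, In i l /\ U i x.

Definition hausdorff {X : Type} (T : (X -> Prop) -> Prop) : Prop :=
  forall x y : X, x <> y ->
    exists U V, T U /\ T V /\ U x /\ V y /\ (forall z, U z -> V z -> False).

Definition continuous {X : Type} (T : (X -> Prop) -> Prop) (f : X -> Cx) : Prop :=
  forall x (eps : R), 0 < eps ->
    exists U, T U /\ U x /\ forall y, U y -> Cmod (Csub (f y) (f x)) < eps.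

Definition in_CX (cplx : bool) {X : Type} (T : (X -> Prop) -> Prop) (f : X -> Cx) : Prop :=
  continuous T f /\ forall x, scalar cplx (f x).

Definition linear_subspace (cplx : bool) {X : Type} (T : (X -> Prop) -> Prop)
  (M : (X -> Cx) -> Prop) : Prop :=
  (forall f, M f -> in_CX cplx T f) /\
  M (fun _ => C0) /\
  (forall f g, M f -> M g -> M (fun x => Cadd (f x) (g x))) /\
  (forall a f, scalar cplx a -> M f -> M (fun x => Cmul a (f x))).

Definition function_space (cplx : bool) {X : Type} (T : (X -> Prop) -> Prop)
  (M : (X -> Cx) -> Prop) : Prop :=
  linear_subspace cplx T M /\
  M (fun _ => C1) /\
  (forall x y : X, x <> y -> exists f, M f /\ f x <> f y).

Definition self_conjugate {X : Type} (M : (X -> Cx) -> Prop) : Prop :=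
  forall f, M f -> M (fun x => Cconj (f x)).

(* phi is an element of the closed unit ball of the dual of (M, sup norm):
   a scalar-valued linear functional on M with |phi g| <= ||g||_sup.
   (The bound |phi g| <= c for every upper bound c of |g| on X is exactly
   |phi g| <= sup_X |g|.)  Functionals are only relevant on M. *)
Definition dual_ball (cplx : bool) {X : Type} (M : (X -> Cx) -> Prop)
  (phi : (X -> Cx) -> Cx) : Prop :=
  (forall g, M g -> scalar cplx (phi g)) /\
  (forall f g, M f -> M g -> phi (fun x => Cadd (f x) (g x)) = Cadd (phi f) (phi g)) /\
  (forall a f, scalar cplx a -> M f -> phi (fun x => Cmul a (f x)) = Cmul a (phi f)) /\
  (forall g (c : R), M g -> (forall x, Cmod (g x) <= c) -> Cmod (phi g) <= c).

(* extreme point of the dual unit ball (equality of functionals = equality on M) *)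
Definition dual_ball_extreme (cplx : bool) {X : Type} (M : (X -> Cx) -> Prop)
  (phi : (X -> Cx) -> Cx) : Prop :=
  dual_ball cplx M phi /\
  forall psi1 psi2 (t : R), dual_ball cplx M psi1 -> dual_ball cplx M psi2 ->
    0 < t < 1 ->
    (forall g, M g -> phi g = Cadd (Cmul (RtoC t) (psi1 g)) (Cmul (RtoC (1 - t)) (psi2 g))) ->
    forall g, M g -> psi1 g = psi2 g.

Definition eval_at {X : Type} (x : X) : (X -> Cx) -> Cx := fun g => g x.

Definition choquet_boundary (cplx : bool) {X : Type} (M : (X -> Cx) -> Prop) (x : X) : Prop :=
  dual_ball_extreme cplx M (eval_at x).

From Pilot Require Import Defs.
From Stdlib Require Import Reals Lra Classical.
Open Scope R_scope.

(* Suppose, for a contradiction, that every h in M vanishing at z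
   satisfies |h(x)| = |h(x')|.  Self-conjugacy and 1 in M put the real function
   y |-> Re g(y) - Re g(z) into M for every g in M; it vanishes at z, so
   A(g) := Re g(x) - Re g(z) and B(g) := Re g(x') - Re g(z) satisfy A = B or
   A = -B pointwise on M.  Since A and B are additive, one of these identities
   holds on all of M (a group is not a union of two proper subgroups).
   A real-linear relation between the real parts of evaluations lifts to the
   evaluations themselves (apply it to -i g), so either
   - g(x') = g(x) for every g in M, contradicting that M separates x and x', or
   - g(z) = (g(x) + g(x'))/2 for every g in M, i.e. delta_z is the midpoint of
     the functionals delta_x and delta_x' of the dual unit ball; extremality of
     delta_z then forces delta_x = delta_x' on M, again contradicting separation.
   Only z in Ch(M) is used; compactness and the Hausdorff property are not. *)

Lemma Cmod_real (a : R) : Cmod (a, 0) = Rabs a.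
Proof.
  unfold Cmod; simpl.
  replace (a * a + 0 * 0) with (Rsqr a) by (unfold Rsqr; ring).
  apply sqrt_Rsqr_abs.
Qed.

Lemma additive_sign_dichotomy (V : Type) (S : V -> Prop) (add : V -> V -> V)
  (A B : V -> R) :
  (forall u v, S u -> S v -> S (add u v)) ->
  (forall u v, S u -> S v -> A (add u v) = A u + A v) ->
  (forall u v, S u -> S v -> B (add u v) = B u + B v) ->
  (forall u, S u -> A u = B u \/ A u = - B u) ->
  (forall u, S u -> A u = B u) \/ (forall u, S u -> A u = - B u).
Proof.
  intros Hclosed HA HB Hsign.
  destruct (classic (forall u, S u -> A u = B u)) as [Heq | Hneq]; [now left|].
  right; intros v Sv.
  destruct (not_all_ex_not _ _ Hneq) as [u Hu].
  destruct (imply_to_and _ _ Hu) as [Su Nu].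
  pose proof (Hsign u Su) as Eu; pose proof (Hsign v Sv) as Ev.
  pose proof (Hsign _ (Hclosed u v Su Sv)) as Euv.
  rewrite (HA u v Su Sv), (HB u v Su Sv) in Euv.
  lra.
Qed.

Section FunctionSpaceFacts.

Variables (cplx : bool) (X : Type) (T : (X -> Prop) -> Prop) (M : (X -> Cx) -> Prop).
Hypothesis HL : linear_subspace cplx T M.

(* A real-linear relation between the real parts of three evaluations on M
   lifts to the same relation between the (complex) evaluations: in the
   complex case apply it to -i g, in the real case imaginary parts vanish. *)
Lemma relation_from_real_parts (p q r : X) (al be : R) :
  (forall g, M g -> fst (g r) = al * fst (g p) + be * fst (g q)) ->
  forall g, M g -> g r = Cadd (Cmul (RtoC al) (g p)) (Cmul (RtoC be) (g q)).
Proof.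
  destruct HL as [Hsub [_ [_ Hscal]]].
  intros Hre g Mg.
  assert (Him : snd (g r) = al * snd (g p) + be * snd (g q)).
  { destruct cplx.
    - assert (Mig : M (fun y => Cmul (0, -1) (g y))) by (apply Hscal; [left; reflexivity | exact Mg]).
      pose proof (Hre _ Mig) as E; unfold Cmul in E; simpl in E; lra.
    - assert (Hreal : forall y, snd (g y) = 0).
      { intro y; destruct (proj2 (Hsub g Mg) y) as [D | D]; [discriminate | exact D]. }
      rewrite !Hreal; ring. }
  pose proof (Hre g Mg) as Ere.
  rewrite (surjective_pairing (g r)); unfold Cadd, Cmul, RtoC; simpl.
  f_equal; lra.
Qed.

Lemma eval_in_dual_ball (y : X) : dual_ball cplx M (eval_at y).
Proof.
  destruct HL as [Hsub _].
  unfold dual_ball, eval_at; repeat split.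
  - intros g Mg; exact (proj2 (Hsub g Mg) y).
  - intros g c _ Hbound; apply Hbound.
Qed.

Lemma midpoint_of_extreme (x x' z : X) :
  choquet_boundary cplx M z ->
  (forall g, M g -> g z = Cadd (Cmul (RtoC (1/2)) (g x)) (Cmul (RtoC (1 - 1/2)) (g x'))) ->
  forall g, M g -> g x = g x'.
Proof.
  intros [_ Hext] Hmid.
  exact (Hext (eval_at x) (eval_at x') (1/2)
              (eval_in_dual_ball x) (eval_in_dual_ball x') ltac:(lra) Hmid).
Qed.

Hypotheses (Hone : M (fun _ => Defs.C1)) (Hconj : self_conjugate M).

(* For g in M and a real c, the real function y |-> Re g(y) - c belongs to M:
   it is (g + conj g)/2 - c * 1. *)
Lemma shifted_real_part_mem (g : X -> Cx) (c : R) :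
  M g -> exists k, M k /\ forall y, k y = (fst (g y) - c, 0).
Proof.
  destruct HL as [_ [_ [Hadd Hscal]]].
  intro Mg.
  exists (fun y => Cadd (Cmul (RtoC (1/2)) (Cadd (g y) (Cconj (g y))))
                   (Cmul (RtoC (- c)) Defs.C1)).
  split.
  - apply Hadd; apply Hscal; unfold scalar; simpl; auto.
  - intro y; unfold Cadd, Cmul, Cconj, RtoC, Defs.C1; simpl; f_equal; field.
Qed.

End FunctionSpaceFacts.

Theorem mainTheorem3 (cplx : bool) (X : Type) (T : (X -> Prop) -> Prop)
  (M : (X -> Cx) -> Prop) :
  @is_topology X T -> @compact_space X T -> @hausdorff X T ->
  function_space cplx T M -> self_conjugate M ->
  forall x x' z : X,
    choquet_boundary cplx M x -> choquet_boundary cplx M x' -> choquet_boundary cplx M z ->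
    x <> x' -> x <> z -> x' <> z ->
    exists h, M h /\ Cmod (h x) <> Cmod (h x') /\ h z = C0.
Proof.
  intros _ _ _ [HL [Hone Hsep]] Hconj x x' z _ _ Chz Hxx' _ _.
  destruct (Hsep x x' Hxx') as [f [Mf Hf]].
  apply NNPP; intro Hnone.
  set (A := fun g : X -> Cx => fst (g x) - fst (g z)).
  set (B := fun g : X -> Cx => fst (g x') - fst (g z)).
  assert (Hsign : forall g, M g -> A g = B g \/ A g = - B g).
  { intros g Mg.
    destruct (shifted_real_part_mem cplx X T M HL Hone Hconj g (fst (g z)) Mg)
      as [k [Mk Hk]].
    assert (Habs : Cmod (k x) = Cmod (k x')).
    { apply NNPP; intro D; apply Hnone; exists k; repeat split; auto.
      rewrite Hk; unfold C0; f_equal; ring. }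
    rewrite !Hk, !Cmod_real in Habs.
    unfold A, B; revert Habs; unfold Rabs.
    destruct Rcase_abs, Rcase_abs; intros; lra. }
  pose proof HL as [_ [_ [Hadd _]]].
  destruct (additive_sign_dichotomy _ M (fun f g y => Cadd (f y) (g y)) A B Hadd
              ltac:(intros; unfold A, Cadd; simpl; ring)
              ltac:(intros; unfold B, Cadd; simpl; ring) Hsign) as [HAB | HAB].
  - (* delta_x = delta_x' on M *)
    apply Hf; rewrite (relation_from_real_parts cplx X T M HL x x x' 1 0
      ltac:(intros g Mg; specialize (HAB g Mg); unfold A, B in HAB; lra) f Mf).
    rewrite (surjective_pairing (f x)); unfold Cadd, Cmul, RtoC; simpl; f_equal; ring.
  - (* delta_z is the midpoint of delta_x and delta_x' *)
    apply Hf; apply (midpoint_of_extreme cplx X T M HL x x' z Chz); auto.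
    apply (relation_from_real_parts cplx X T M HL).
    intros g Mg; specialize (HAB g Mg); unfold A, B in HAB; lra.
Qed.
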